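(* The set $\{\phi_{j_1,j_2,j_3}\;:\;(j_1,j_2,j_3)\in\mathbf J\}$ of genus two Schur polynomials is a $\mathbb C$-basis of $\mathcal H$.
   Context: A triple $(j_1,j_2,j_3)$ of nonnegative integers is admissible if $|j_1-j_2|\le j_3\le j_1+j_2$ and $j_1+j_2+j_3$ is even; $\mathbf J$ denotes the set of admissible triples. Let $\mathcal H=\mathbb C[x_{12}^{\pm1},x_{13}^{\pm1},x_{23}^{\pm1}]^{\mathbb Z_2\times\mathbb Z_2\times\mathbb Z_2}=\mathbb C[x_{12}+x_{12}^{-1},x_{13}+x_{13}^{-1},x_{23}+x_{23}^{-1}]$. For $a,b\in\{\pm1\}$ set $K_{a,b}(j_1,j_2,j_3)=ab\,\frac{(aj_1+bj_2+j_3+a+b+2)(aj_1+bj_2-j_3+a+b)}{4(j_1+1)(j_2+1)}$. The genus two Schur polynomials $(\phi_{j_1,j_2,j_3})_{(j_1,j_2,j_3)\in\mathbf J}$ are the unique family in $\mathcal H$ with $\phi_{0,0,0}=1$ such that for all admissible $(j_1,j_2,j_3)$: $(x_{12}+x_{12}^{-1})\phi_{j_1,j_2,j_3}=\sum_{a,b\in\{\pm1\}}K_{a,b}(j_1,j_2,j_3)\phi_{j_1+a,j_2+b,j_3}$, $(x_{13}+x_{13}^{-1})\phi_{j_1,j_2,j_3}=\sum_{a,b\in\{\pm1\}}K_{a,b}(j_1,j_3,j_2)\phi_{j_1+a,j_2,j_3+b}$, $(x_{23}+x_{23}^{-1})\phi_{j_1,j_2,j_3}=\sum_{a,b\in\{\pm1\}}K_{a,b}(j_2,j_3,j_1)\phi_{j_1,j_2+a,j_3+b}$,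 where $\phi$ of a non-admissible triple is interpreted as $0$. *)

From mathcomp Require Import all_boot all_algebra.
From mathcomp Require Import complex.
From mathcomp Require Import Rstruct.
From mathcomp Require Import mpoly.
Import GRing.Theory Num.Theory.
Set Implicit Arguments.
Unset Strict Implicit.
Unset Printing Implicit Defensive.
Local Open Scope ring_scope.

Notation CC := (complex Rdefinitions.R).

(* H = C[x12+x12^-1, x13+x13^-1, x23+x23^-1], a polynomial ring in the three
   algebraically independent generators u12, u13, u23. *)
Notation HH := {mpoly CC[3]}.

Definition u12 : HH := 'X_(0 : 'I_3).
Definition u13 : HH := 'X_(1 : 'I_3).
Definition u23 : HH := 'X_(2 : 'I_3).

Definition triple := (int * int * int)%type.

Definition admissible (t : triple) : bool :=
  let: (j1, j2, j3) := t in
  [&& (0 <= j1), (0 <= j2), (`|j1 - j2| <= j3), (j3 <= j1 + j2)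
    & (2 %| j1 + j2 + j3)%Z].

Definition Kc (a b j1 j2 j3 : int) : CC :=
  (a * b)%:~R * ((a * j1 + b * j2 + j3 + a + b + 2)
                  * (a * j1 + b * j2 - j3 + a + b))%:~R
  / (4 * (j1 + 1) * (j2 + 1))%:~R.

Definition signs : seq int := [:: 1%R; (-1)%R].

Definition ext (phi : triple -> HH) (t : triple) : HH :=
  if admissible t then phi t else 0.

Definition genus2_schur (phi : triple -> HH) : Prop :=
  phi (0, 0, 0) = 1 /\
  forall j1 j2 j3 : int, admissible (j1, j2, j3) ->
    [/\ u12 * phi (j1, j2, j3) =
          \sum_(a <- signs) \sum_(b <- signs)
             Kc a b j1 j2 j3 *: ext phi (j1 + a, j2 + b, j3),
        u13 * phi (j1, j2, j3) =
          \sum_(a <- signs) \sum_(b <- signs)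
             Kc a b j1 j3 j2 *: ext phi (j1 + a, j2, j3 + b)
      & u23 * phi (j1, j2, j3) =
          \sum_(a <- signs) \sum_(b <- signs)
             Kc a b j2 j3 j1 *: ext phi (j1, j2 + a, j3 + b)].

Definition is_basis_on_J (phi : triple -> HH) : Prop :=
  (forall (s : seq triple) (c : triple -> CC),
      uniq s -> all admissible s ->
      \sum_(t <- s) c t *: phi t = 0 ->
      forall t, t \in s -> c t = 0)
  /\
  (forall p : HH, exists (s : seq triple) (c : triple -> CC),
      all admissible s /\ p = \sum_(t <- s) c t *: phi t).

From mathcomp Require Import all_boot all_order all_algebra.
From mathcomp Require Import complex Rstruct mpoly.
From mathcomp Require Import ring zify.
Import Order.TTheory GRing.Theory Num.Theory.
Local Open Scope ring_scope.

(* Write an admissible triple as (j1, j2, j3) = (q + r, p + r, p + q) with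
   p, q, r >= 0.  In these coordinates the recurrence for u12 expresses phi at
   (p, q, r + 1) through u12 * phi(p, q, r) and values of phi at points of weight
   p + q + r at most, with a nonzero leading coefficient; likewise u13 raises q
   and u23 raises p.  Raising r first, then q, then p defines a unique candidate
   family by induction on the weight, and the recurrences not used to define it
   follow from those that were because the three recurrence operators commute
   (a finite identity between rational functions).  The recurrences also show
   that phi(p, q, r) has degree p + q + r with top homogeneous part a nonzero
   multiple of u12^r u13^q u23^p.  These monomials are distinct, so the family is
   free, and it spans because every monomial is obtained from phi(0, 0, 0) = 1 by
   multiplications by the generators, which the recurrences keep in the span. *)

(** * Coordinates *)

Definition tadd (x d : triple) : triple :=
  (x.1.1 + d.1.1, x.1.2 + d.1.2, x.2 + d.2).

Lemma taddA (x d e : triple) : tadd (tadd x d) e = tadd x (tadd d e).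
Proof. by rewrite /tadd /= !addrA. Qed.

Definition nonneg (x : triple) : bool := [&& 0 <= x.1.1, 0 <= x.1.2 & 0 <= x.2].

Definition weight (x : triple) : int := x.1.1 + x.1.2 + x.2.

Lemma weight_ge0 {x : triple} : nonneg x -> 0 <= weight x.
Proof. by rewrite /nonneg /weight => /and3P[]; lia. Qed.

Definition spins (x : triple) : triple :=
  (x.1.2 + x.2, x.1.1 + x.2, x.1.1 + x.1.2).

Definition pqr_of (t : triple) : triple :=
  (((t.1.2 + t.2 - t.1.1) %/ 2)%Z, ((t.1.1 + t.2 - t.1.2) %/ 2)%Z,
   ((t.1.1 + t.1.2 - t.2) %/ 2)%Z).

Lemma admissible_spins (x : triple) : admissible (spins x) = nonneg x.
Proof.
case: x => [[p q] r]; rewrite /admissible /spins /nonneg /=.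
rewrite (_ : q + r + (p + r) + (p + q) = (p + q + r) * 2); last by ring.
rewrite dvdz_mull // andbT.
by apply/idP/idP => [/and4P [h1 h2 h3 h4] | /and3P [h1 h2 h3]];
  [apply/and3P | apply/and4P]; do ?split; lia.
Qed.

Lemma spinsK : cancel spins pqr_of.
Proof.
case=> [[p q] r]; rewrite /pqr_of /spins /=.
rewrite (_ : p + r + (p + q) - (q + r) = p * 2); last by ring.
rewrite (_ : q + r + (p + q) - (p + r) = q * 2); last by ring.
rewrite (_ : q + r + (p + r) - (p + q) = r * 2); last by ring.
by rewrite !mulzK.
Qed.

Lemma pqr_ofK (t : triple) : admissible t -> spins (pqr_of t) = t.
Proof.
case: t => [[j1 j2] j3]; rewrite /admissible /= => /and5P [h1 h2 h3 h4 /dvdzP [k hk]].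
rewrite /pqr_of /spins /=.
rewrite (_ : j2 + j3 - j1 = (k - j1) * 2); last by rewrite mulrBl -hk; ring.
rewrite (_ : j1 + j3 - j2 = (k - j2) * 2); last by rewrite mulrBl -hk; ring.
rewrite (_ : j1 + j2 - j3 = (k - j3) * 2); last by rewrite mulrBl -hk; ring.
by rewrite !mulzK //; congr (_, _, _); lia.
Qed.

Lemma nonneg_pqr_of (t : triple) : admissible t -> nonneg (pqr_of t).
Proof. by move=> ht; rewrite -admissible_spins pqr_ofK. Qed.

(** * The recurrences in the coordinates (p, q, r) *)

Definition recurrence := triple -> seq (CC * triple).

Definition satisfies (u : HH) (rel : recurrence) (F : triple -> HH) (x : triple) :=
  u * F x = \sum_(y <- rel x) y.1 *: F y.2.

(* Moves leaving the nonnegative octant get coefficient 0, so that the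
   recurrences hold trivially outside it. *)
Definition rcoef (x d : triple) (num den : int) : CC :=
  if nonneg x && nonneg (tadd x d) then num%:~R / den%:~R else 0.

(* The recurrences of [u12], [u13], [u23] in the coordinates [(p, q, r)] with
   [(j1, j2, j3) = (q + r, p + r, p + q)]; their first moves raise [r], [q], [p]. *)
Definition rec12 : recurrence := fun x =>
  let p := x.1.1 in let q := x.1.2 in let r := x.2 in
  let s := weight x in let D := (q + r + 1) * (p + r + 1) in
  [:: (rcoef x (0, 0, 1) ((s + 2) * (r + 1)) D, tadd x (0, 0, 1));
      (rcoef x (-1, 1, 0) ((q + 1) * p) D, tadd x (-1, 1, 0));
      (rcoef x (1, -1, 0) ((p + 1) * q) D, tadd x (1, -1, 0));
      (rcoef x (0, 0, -1) (r * (s + 1)) D, tadd x (0, 0, -1))].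

Definition rec13 : recurrence := fun x =>
  let p := x.1.1 in let q := x.1.2 in let r := x.2 in
  let s := weight x in let D := (q + r + 1) * (p + q + 1) in
  [:: (rcoef x (0, 1, 0) ((s + 2) * (q + 1)) D, tadd x (0, 1, 0));
      (rcoef x (-1, 0, 1) ((r + 1) * p) D, tadd x (-1, 0, 1));
      (rcoef x (1, 0, -1) ((p + 1) * r) D, tadd x (1, 0, -1));
      (rcoef x (0, -1, 0) (q * (s + 1)) D, tadd x (0, -1, 0))].

Definition rec23 : recurrence := fun x =>
  let p := x.1.1 in let q := x.1.2 in let r := x.2 in
  let s := weight x in let D := (p + r + 1) * (p + q + 1) in
  [:: (rcoef x (1, 0, 0) ((s + 2) * (p + 1)) D, tadd x (1, 0, 0));
      (rcoef x (0, -1, 1) ((r + 1) * q) D, tadd x (0, -1, 1));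
      (rcoef x (0, 1, -1) ((q + 1) * r) D, tadd x (0, 1, -1));
      (rcoef x (-1, 0, 0) (p * (s + 1)) D, tadd x (-1, 0, 0))].

Definition rec (i : 'I_3) : recurrence :=
  match val i with 0 => rec12 | 1 => rec13 | _ => rec23 end.

Definition raise (i : 'I_3) : triple :=
  match val i with 0 => (0, 0, 1) | 1 => (0, 1, 0) | _ => (1, 0, 0) end.

Lemma ord3P (i : 'I_3) : [\/ i = 0, i = 1 | i = 2].
Proof.
by case: i => [[|[|[|?]]] ?] //; [constructor 1 | constructor 2 | constructor 3];
  apply: val_inj.
Qed.

Ltac case_ord3 i := case: (ord3P i) => ->.

Lemma rec_out (i : 'I_3) (x : triple) :
  ~~ nonneg x -> all (fun y => y.1 == 0) (rec i x).
Proof.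
by case: x => [[p q] r] hx; case_ord3 i; rewrite /rec /= /rcoef (negbTE hx) eqxx.
Qed.

Lemma rec_weight_behead (i : 'I_3) (x : triple) (y : CC * triple) :
  y \in behead (rec i x) -> weight y.2 <= weight x.
Proof.
case: x => [[p q] r]; case_ord3 i;
  by rewrite /rec /= !inE => /or3P [] /eqP -> /=; rewrite /weight /tadd /=; lia.
Qed.

Lemma rec_weight (i : 'I_3) (x : triple) (y : CC * triple) :
  y \in rec i x -> weight y.2 <= weight x + 1.
Proof.
case: x => [[p q] r]; case_ord3 i;
  by rewrite /rec /= !inE => /or4P [] /eqP -> /=; rewrite /weight /tadd /=; lia.
Qed.

Lemma rec_cons (i : 'I_3) {x : triple} : nonneg x ->
  exists2 c, c != 0 & rec i x = (c, tadd x (raise i)) :: behead (rec i x).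
Proof.
case: x => [[p q] r] hx; have := hx; rewrite /nonneg /= => /and3P [hp hq hr].
case_ord3 i; (eexists; last by []); rewrite /rcoef hx /tadd /nonneg /weight /=;
  (rewrite ifT; last by apply/and3P; split; lia);
  by rewrite mulf_neq0 ?invr_eq0 ?intr_eq0 //; lia.
Qed.

Lemma weight_raise (x : triple) (i : 'I_3) : weight (tadd x (raise i)) = weight x + 1.
Proof. by case: x => [[p q] r]; case_ord3 i; rewrite /weight /tadd /=; lia. Qed.

Lemma nonneg_raise (x : triple) (i : 'I_3) : nonneg x -> nonneg (tadd x (raise i)).
Proof.
by case: x => [[p q] r]; rewrite /nonneg /= => /and3P [? ? ?]; case_ord3 i;
  rewrite /tadd /=; apply/and3P; split; lia.
Qed.

Ltac int_of e := lazymatch e with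
  | @Algebra.add _ ?a ?b =>
      let x := int_of a in let y := int_of b in constr:((x + y)%R : int)
  | @Algebra.opp _ ?a => let x := int_of a in constr:((- x)%R : int)
  | @GRing.mul _ ?a ?b =>
      let x := int_of a in let y := int_of b in constr:((x * y)%R : int)
  | @Algebra.natmul _ _ ?n => constr:(Posz n)
  | @intmul _ _ ?z => z
  | @Algebra.zero _ => constr:(0 : int)
  | @GRing.one _ => constr:(1 : int)
  end.

(* The side conditions of [field] are sums and products of integer casts;
   read them back as integers and let [lia] check they do not vanish. *)
Ltac int_cast_neq0 :=
  try done; repeat (apply/andP; split);
  match goal with |- is_true (negb (@eq_op _ ?e _)) =>
    let z := int_of e in
    rewrite (_ : e = z%:~R); [rewrite intr_eq0; lia | ring] end.

Definition on_pqr (phi : triple -> HH) (x : triple) : HH := ext phi (spins x).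

Lemma on_pqr_term (phi : triple -> HH) (x d : triple) (num den : int) (k : CC) t :
  nonneg x -> t = spins (tadd x d) ->
  (nonneg (tadd x d) -> k = num%:~R / den%:~R) ->
  k *: ext phi t = rcoef x d num den *: on_pqr phi (tadd x d).
Proof.
move=> hx -> hk; rewrite /rcoef /on_pqr hx /=.
case hxd: (nonneg (tadd x d)); first by rewrite hk.
by rewrite /ext admissible_spins hxd !scaler0.
Qed.

(* The four terms of the sum over [signs] are the four moves of the
   recurrence, in the same order. *)
Ltac on_pqr_sum x :=
  case: x => [[p q] r] /[dup] hx; rewrite {1}/nonneg /= => /and3P [hp hq hr];
  rewrite /signs /rec12 /rec13 /rec23 !big_cons !big_nil /= !addr0 -!addrA;
  congr (_ + (_ + (_ + _))); (apply: on_pqr_term => //;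
    [ rewrite /spins /tadd /=; congr (_, _, _); lia
    | move=> _; rewrite /Kc /weight /=; field; int_cast_neq0 ]).

Lemma sum12_spins (phi : triple -> HH) (x : triple) : nonneg x ->
  \sum_(a <- signs) \sum_(b <- signs) Kc a b (spins x).1.1 (spins x).1.2 (spins x).2
      *: ext phi ((spins x).1.1 + a, (spins x).1.2 + b, (spins x).2)
  = \sum_(y <- rec12 x) y.1 *: on_pqr phi y.2.
Proof. on_pqr_sum x. Qed.

Lemma sum13_spins (phi : triple -> HH) (x : triple) : nonneg x ->
  \sum_(a <- signs) \sum_(b <- signs) Kc a b (spins x).1.1 (spins x).2 (spins x).1.2
      *: ext phi ((spins x).1.1 + a, (spins x).1.2, (spins x).2 + b)
  = \sum_(y <- rec13 x) y.1 *: on_pqr phi y.2.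
Proof. on_pqr_sum x. Qed.

Lemma sum23_spins (phi : triple -> HH) (x : triple) : nonneg x ->
  \sum_(a <- signs) \sum_(b <- signs) Kc a b (spins x).1.2 (spins x).2 (spins x).1.1
      *: ext phi ((spins x).1.1, (spins x).1.2 + a, (spins x).2 + b)
  = \sum_(y <- rec23 x) y.1 *: on_pqr phi y.2.
Proof. on_pqr_sum x. Qed.

Definition schur_pqr (F : triple -> HH) : Prop :=
  [/\ F (0, 0, 0) = 1, forall x, ~~ nonneg x -> F x = 0
    & forall (i : 'I_3) x, nonneg x -> satisfies 'X_i (rec i) F x].

Lemma genus2_schur_pqr (phi : triple -> HH) : genus2_schur phi -> schur_pqr (on_pqr phi).
Proof.
case=> phi0 hrec; split=> [|x hx|i x hx]; rewrite /on_pqr.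
- by rewrite /ext /spins /= addr0 phi0.
- by rewrite /ext admissible_spins (negbTE hx).
have [h12 h13 h23] := hrec _ _ _ (etrans (admissible_spins x) hx).
rewrite /u12 /u13 /u23 in h12 h13 h23; rewrite /satisfies /ext admissible_spins hx.
by case_ord3 i; rewrite /rec /=; [rewrite h12 sum12_spins | rewrite h13 sum13_spins
  | rewrite h23 sum23_spins].
Qed.

Lemma on_pqr_spins (phi : triple -> HH) (x : triple) :
  nonneg x -> on_pqr phi x = phi (spins x).
Proof. by move=> hx; rewrite /on_pqr /ext admissible_spins hx. Qed.

Lemma on_pqr_comp (F : triple -> HH) :
  (forall x, ~~ nonneg x -> F x = 0) -> on_pqr (F \o pqr_of) =1 F.
Proof.
move=> Fout x; rewrite /on_pqr /ext admissible_spins /= spinsK.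
by case: ifP => // /negbT /Fout ->.
Qed.

Lemma schur_pqr_genus2 (F : triple -> HH) : schur_pqr F -> genus2_schur (F \o pqr_of).
Proof.
case=> F0 Fout hrec; split=> [|j1 j2 j3 adm]; first by rewrite /= -F0.
have := pqr_ofK _ adm; have := nonneg_pqr_of _ adm; rewrite /=.
move: (pqr_of _) => x hx ex.
have -> : j1 = (spins x).1.1 by rewrite ex.
have -> : j2 = (spins x).1.2 by rewrite ex.
have -> : j3 = (spins x).2 by rewrite ex.
rewrite sum12_spins // sum13_spins // sum23_spins //.
have sat i : satisfies 'X_i (rec i) F x by exact: hrec.
move: (sat 0%R) (sat 1%R) (sat 2%R); rewrite /satisfies /u12 /u13 /u23 /= => -> -> ->.
by split; apply: eq_bigr => y _; rewrite on_pqr_comp.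
Qed.

(** * Consistency of the recurrences *)

Definition expand (rel : recurrence) (G : triple -> CC) (x : triple) : CC :=
  \sum_(y <- rel x) y.1 * G y.2.

Definition commute_at (relA relB : recurrence) (x : triple) :=
  forall G, expand relA (expand relB G) x = expand relB (expand relA G) x.

Ltac normalize_points x :=
  repeat match goal with |- context [tadd (tadd x ?d) ?e] => rewrite (taddA x d e) end;
  repeat match goal with |- context [tadd ?d ?e] =>
    tryif constr_eq d x then fail else
    (let v := eval vm_compute in (tadd d e) in change (tadd d e) with v) end.

Ltac decide_guards :=
  repeat match goal with |- context [if ?b then _ else _] =>
    (rewrite (_ : b = true); last by apply/idP; rewrite /nonneg /tadd /=; lia) ||
    (rewrite (_ : b = false); last by apply/negbTE/negP; rewrite /nonneg /tadd /=; lia)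
  end.

(* Once each coordinate of [x] is known to be 0, 1 or at least 2, every guard
   of [rcoef] along a path of length two is decided and the identity becomes one
   between rational functions of the coordinates. *)
Lemma rec_commute_at (i j : 'I_3) {x : triple} :
  nonneg x -> commute_at (rec i) (rec j) x.
Proof.
wlog le_ij : i j / (i <= j)%N => [hwlog hx G|].
  by case: (leqP i j) => [/hwlog -> | /ltnW /hwlog ->].
case: x => [[p q] r]; rewrite /nonneg /= => /and3P [hp hq hr] G.
case: p hp => // a _; case: q hq => // b _; case: r hr => // c _.
set x := (Posz a, _, _).
move: le_ij; case_ord3 i; case_ord3 j => //= _;
  rewrite //= /expand /rec /= /rec12 /rec13 /rec23 !big_cons !big_nil /=;
  normalize_points x;
  case: a @x => [|[|a]] x; case: b @x => [|[|b]] x; case: c @x => [|[|c]] x;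
  rewrite /rcoef; decide_guards; rewrite /x /weight /tadd /=; field; int_cast_neq0.
Qed.

Lemma commute_at_mpoly {relA relB : recurrence} (F : triple -> HH) {x : triple} :
  commute_at relA relB x ->
  \sum_(y <- relA x) y.1 *: \sum_(z <- relB y.2) z.1 *: F z.2
  = \sum_(y <- relB x) y.1 *: \sum_(z <- relA y.2) z.1 *: F z.2.
Proof.
move=> hc; apply/mpolyP => m; have := hc (fun z => (F z)@_m); rewrite /expand => e.
rewrite !raddf_sum /=.
transitivity (\sum_(y <- relA x) y.1 * \sum_(z <- relB y.2) z.1 * (F z.2)@_m).
  by apply: eq_bigr => y _; rewrite mcoeffZ raddf_sum /=; congr (_ * _);
    apply: eq_bigr => z _; rewrite mcoeffZ.
rewrite e; apply: eq_bigr => y _; rewrite mcoeffZ raddf_sum /=; congr (_ * _).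
by apply: eq_bigr => z _; rewrite mcoeffZ.
Qed.

(* Multiplying the [relA]-recurrence at [x] by [v] and commuting the two
   recurrences expresses [c * v * F t] through [relB] at [t]. *)
Lemma satisfies_raise {u v : HH} {relA relB : recurrence} {F : triple -> HH}
    {x t : triple} {c : CC} {rest : seq (CC * triple)} :
  relA x = (c, t) :: rest -> c != 0 -> commute_at relA relB x ->
  satisfies u relA F x -> satisfies v relB F x ->
  {in rest, forall y, satisfies v relB F y.2} ->
  {in relB x, forall y, satisfies u relA F y.2} ->
  satisfies v relB F t.
Proof.
rewrite /satisfies => ex c0 hc hA hB hrest hall.
apply: (scalerI c0); rewrite scalerAr.
have -> : c *: F t = u * F x - \sum_(y <- rest) y.1 *: F y.2.
  by rewrite hA ex big_cons /= addrK.
rewrite mulrBr mulrCA hB !mulr_sumr.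
under eq_big_seq => y yin do rewrite -scalerAr (hall y yin).
under [X in _ - X]eq_big_seq => y yin do rewrite -scalerAr (hrest y yin).
by rewrite -(commute_at_mpoly F hc) ex big_cons /= scaler_sumr addrK.
Qed.

Lemma satisfies_out (u : HH) (i : 'I_3) (F : triple -> HH) (y : triple) :
  ~~ nonneg y -> F y = 0 -> satisfies u (rec i) F y.
Proof.
move=> hy Fy0; rewrite /satisfies Fy0 mulr0 big_seq big1 // => z zin.
by move/allP: (rec_out i y hy) => /(_ z zin) /eqP ->; rewrite scale0r.
Qed.

(** * Construction of the genus two Schur polynomials *)

(* The recurrence that defines [schur] at [t], and the point it starts from. *)
Definition parent (t : triple) : option ('I_3 * triple) :=
  if 0 < t.2 then Some (0%R, tadd t (0, 0, -1))
  else if 0 < t.1.2 then Some (1%R, tadd t (0, -1, 0))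
  else if 0 < t.1.1 then Some (2%R, tadd t (-1, 0, 0))
  else None.

Lemma parentP {t x : triple} {i : 'I_3} : nonneg t -> parent t = Some (i, x) ->
  t = tadd x (raise i) /\ nonneg x.
Proof.
case: t => [[p q] r]; rewrite /nonneg /parent /= => /and3P [hp hq hr].
by repeat case: ifP => ?; move=> // [<- <-]; rewrite /raise /tadd /=;
  (split; [congr (_, _, _); lia | apply/and3P; split; lia]).
Qed.

Lemma parent0 {t : triple} : nonneg t -> parent t = None -> t = (0, 0, 0).
Proof.
case: t => [[p q] r]; rewrite /nonneg /parent /= => /and3P [hp hq hr].
by repeat case: ifP => ?; move=> // _; congr (_, _, _); lia.
Qed.

Lemma parent_cases (j : 'I_3) {x : triple} : nonneg x ->
  parent (tadd x (raise j)) = Some (j, x) \/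
  exists2 i : 'I_3, (i < j)%N & exists x0, parent x = Some (i, x0).
Proof.
case: x => [[p q] r]; rewrite /nonneg /= => /and3P [hp hq hr].
have r_pos : 0 < r -> exists x0, parent (p, q, r) = Some (0%R, x0).
  by move=> r0; eexists; rewrite /parent /= ifT.
have q_pos : r = 0 -> 0 < q -> exists x0, parent (p, q, r) = Some (1%R, x0).
  by move=> -> q0; eexists; rewrite /parent /= ?ltxx /= ifT.
case_ord3 j.
- by left; rewrite /parent /tadd /=; decide_guards; repeat f_equal; lia.
- case: (ltrP 0 r) => r0; first by right; exists 0%R => //; exact: r_pos.
  by left; rewrite /parent /tadd /=; decide_guards; repeat f_equal; lia.
case: (ltrP 0 r) => r0; first by right; exists 0%R => //; exact: r_pos.
case: (ltrP 0 q) => q0; first by right; exists 1%R => //; apply: q_pos => //; lia.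
by left; rewrite /parent /tadd /=; decide_guards; repeat f_equal; lia.
Qed.

Definition extend (F : triple -> HH) (t : triple) : HH :=
  if parent t is Some (i, x) then
    (head (0, t) (rec i x)).1^-1 *:
      ('X_i * F x - \sum_(y <- behead (rec i x)) y.1 *: F y.2)
  else 0.

(* [schur_upto n] is correct on the points of weight at most [n]. *)
Fixpoint schur_upto (n : nat) (t : triple) : HH :=
  if n is n'.+1 then
    if ~~ nonneg t then 0
    else if weight t <= n'%:Z then schur_upto n' t else extend (schur_upto n') t
  else if t == (0, 0, 0) then 1 else 0.

Definition schur (t : triple) : HH := schur_upto `|weight t| t.

Lemma schur_upto_out (n : nat) (t : triple) : ~~ nonneg t -> schur_upto n t = 0.
Proof.
case: n => [|n] ht /=; last by rewrite ht.
by case: eqP => // et; move: ht; rewrite et.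
Qed.

Lemma schur_out (t : triple) : ~~ nonneg t -> schur t = 0.
Proof. exact: schur_upto_out. Qed.

Lemma schur_uptoE (n : nat) (t : triple) : weight t <= n%:Z -> schur_upto n t = schur t.
Proof.
have [ht|/schur_upto_out ht] := boolP (nonneg t); last by rewrite /schur !ht.
have := weight_ge0 ht; elim: n => [|n IH] w0 wn.
  by rewrite /schur (_ : `|weight t|%N = 0%N) //; lia.
rewrite /= ht /=; case: ifP => wn'; first exact: IH.
by rewrite /schur (_ : `|weight t|%N = n.+1) /= ?ht ?wn' //; lia.
Qed.

Lemma schur_upto_extend (n : nat) (t : triple) : nonneg t -> weight t = n%:Z + 1 ->
  schur_upto n.+1 t = extend (schur_upto n) t.
Proof. by move=> ht wt; rewrite /= ht ifF //; apply/negbTE; rewrite -ltNge wt; lia. Qed.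

Lemma schur_parent {t x : triple} {i : 'I_3} : nonneg t -> parent t = Some (i, x) ->
  satisfies 'X_i (rec i) schur x.
Proof.
move=> ht pt; have [et hx] := parentP ht pt; subst t.
have [c c0 ex] := rec_cons i hx.
set n := `|weight x|%N.
have wx : weight x = n%:Z by have := weight_ge0 hx; rewrite /n; lia.
have schurE : schur (tadd x (raise i))
    = c^-1 *: ('X_i * schur x - \sum_(y <- behead (rec i x)) y.1 *: schur y.2).
  rewrite -(schur_uptoE n.+1); last by rewrite weight_raise wx; lia.
  rewrite schur_upto_extend ?weight_raise ?wx // /extend pt ex /= (schur_uptoE n) ?wx //.
  congr (_ *: (_ - _)).
  by apply: eq_big_seq => y /rec_weight_behead wy; rewrite schur_uptoE // -wx.
by rewrite /satisfies ex big_cons /= schurE scalerA mulfV // scale1r subrK.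
Qed.

(* [rec j] at [x] either defines [schur] at its target, or follows by commutation
   from the recurrence defining [schur] at [x], which has a smaller index. *)
Lemma schur_satisfies_step {n : int} {j : 'I_3} {x : triple} :
  (forall (i : 'I_3) y, nonneg y -> weight y < n -> satisfies 'X_i (rec i) schur y) ->
  (forall (i : 'I_3) y, (i < j)%N -> nonneg y -> weight y = n ->
    satisfies 'X_i (rec i) schur y) ->
  nonneg x -> weight x = n -> satisfies 'X_j (rec j) schur x.
Proof.
move=> below same hx wx.
have sat (k : 'I_3) y : weight y < n \/ weight y = n /\ (k < j)%N ->
    satisfies 'X_k (rec k) schur y.
  have [hy [lt|[eq lt]]|hy _] := boolP (nonneg y); [exact: below | exact: same |].
  by apply: satisfies_out; rewrite ?schur_out.
have [pj|[i lt_ij [x0 px]]] := parent_cases j hx.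
  exact: schur_parent (nonneg_raise _ _ hx) pj.
have [ex hx0] := parentP hx px.
have wx0 : weight x0 + 1 = n by rewrite -wx ex weight_raise.
have [c c0 ec] := rec_cons i hx0; rewrite ex.
apply: (satisfies_raise ec c0 (rec_commute_at i j hx0)).
- by apply: sat; left; lia.
- by apply: sat; left; lia.
- by move=> y /rec_weight_behead wy; apply: sat; left; apply: le_lt_trans wy _; lia.
- move=> y /rec_weight; rewrite wx0 le_eqVlt => /orP [/eqP wy | wy].
    by apply: sat; right.
  by apply: sat; left.
Qed.

Lemma schur_satisfies (j : 'I_3) (x : triple) : nonneg x -> satisfies 'X_j (rec j) schur x.
Proof.
move=> hx; have [n wx] : exists n : nat, weight x = n%:Z.
  by exists `|weight x|%N; have := weight_ge0 hx; lia.
elim/ltn_ind: n j x hx wx => n IHn j.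
move: {2}(val j) (erefl (val j)) => k; elim/ltn_ind: k j => k IHk j ej x hx wx.
apply: (schur_satisfies_step _ _ hx wx) => [i y hy wy | i y lt_ij hy wy].
  by apply: (IHn `|weight y|%N) => //; have := weight_ge0 hy; lia.
by apply: (IHk i) => //; rewrite -ej.
Qed.

Lemma schur_pqr_schur : schur_pqr schur.
Proof. by split; [| exact: schur_out | move=> i x; exact: schur_satisfies]. Qed.

(** * Leading terms and the basis property *)

Lemma mcoeffXM {n : nat} {R : comNzRingType} (i : 'I_n) (p : {mpoly R[n]}) m :
  ('X_i * p)@_m = if (0 < m i)%N then p@_(m - U_(i))%MM else 0.
Proof.
have [mi0 | mi0] := posnP (m i); last first.
  have le_im : (U_(i) <= m)%MM by apply/mnm_lepP => j; rewrite mnm1E; case: eqP => [<-|].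
  by rewrite -{1}(submK le_im) mulrC addmC mcoeffMX.
apply/eqP; rewrite mcoeff_eq0 mulrC (perm_mem (msuppMX _ _)).
by apply/mapP => -[m' _ em]; move: mi0; rewrite em mnmDE mnm1E eqxx.
Qed.

Definition leading_mono (x : triple) : 'X_{1..3} :=
  [multinom `|match val i with 0 => x.2 | 1 => x.1.2 | _ => x.1.1 end|%N | i < 3].

Lemma leading_mono_raise (x : triple) (i : 'I_3) : nonneg x ->
  leading_mono (tadd x (raise i)) = (U_(i) + leading_mono x)%MM.
Proof.
case: x => [[p q] r]; rewrite /nonneg /= => /and3P [hp hq hr].
apply/mnmP => k; rewrite mnmDE mnm1E /leading_mono !mnmE.
by case_ord3 i; case_ord3 k; rewrite /raise /tadd /=; lia.
Qed.

Lemma mdeg_leading_mono (x : triple) : nonneg x -> mdeg (leading_mono x) = `|weight x|%N.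
Proof.
case: x => [[p q] r]; rewrite /nonneg /= => /and3P [hp hq hr].
by rewrite mdegE !big_ord_recr big_ord0 /= !mnmE /weight /=; lia.
Qed.

Lemma leading_mono_inj {x y : triple} : nonneg x -> nonneg y ->
  leading_mono x = leading_mono y -> x = y.
Proof.
case: x y => [[p q] r] [[p' q'] r']; rewrite /nonneg /= => /and3P [? ? ?] /and3P [? ? ?] e.
have := congr1 (fun m : 'X_{1..3} => m 0%R) e; have := congr1 (fun m : 'X_{1..3} => m 1%R) e.
have := congr1 (fun m : 'X_{1..3} => m 2%R) e; rewrite !mnmE /= => ? ? ?.
by congr (_, _, _); lia.
Qed.

Definition leading_term (F : triple -> HH) (x : triple) : Prop :=
  exists2 c : CC, c != 0 & forall m, (`|weight x| <= mdeg m)%N ->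
    (F x)@_m = c * (m == leading_mono x)%:R.

Lemma leading_term_high {F : triple -> HH} {x : triple} {m : 'X_{1..3}} :
  nonneg x -> leading_term F x -> (`|weight x| < mdeg m)%N -> (F x)@_m = 0.
Proof.
move=> hx [c _ hc] hm; rewrite hc ?(ltnW hm) //.
by case: eqP => [em|]; [move: hm; rewrite em mdeg_leading_mono // ltnn | rewrite mulr0].
Qed.

Lemma leading_term_raise {F : triple -> HH} {i : 'I_3} {x : triple} {c : CC} {rest} :
  (forall y, ~~ nonneg y -> F y = 0) -> nonneg x ->
  rec i x = (c, tadd x (raise i)) :: rest -> c != 0 -> satisfies 'X_i (rec i) F x ->
  leading_term F x -> {in rest, forall y, nonneg y.2 -> leading_term F y.2} ->
  leading_term F (tadd x (raise i)).
Proof.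
move=> Fout hx ex c0 hsat [c1 c10 hc1] hrest.
have Ft : F (tadd x (raise i)) = c^-1 *: ('X_i * F x - \sum_(y <- rest) y.1 *: F y.2).
  by rewrite hsat ex big_cons /= addrK scalerA mulVf // scale1r.
exists (c^-1 * c1) => [|m]; first by rewrite mulf_neq0 ?invr_eq0.
rewrite weight_raise (_ : absz (weight x + 1) = (absz (weight x)).+1); last first.
  by have := weight_ge0 hx; lia.
move=> hm; rewrite Ft mcoeffZ mcoeffB raddf_sum /= big_seq big1 => [|[a z] zin]; last first.
  rewrite mcoeffZ /=; have [hz|hz] := boolP (nonneg z); last by rewrite Fout ?mcoeff0 ?mulr0.
  rewrite (leading_term_high hz (hrest (a, z) zin hz)) ?mulr0 //.
  have := rec_weight_behead i x (a, z); rewrite ex /= => /(_ zin) wz.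
  by apply: (leq_ltn_trans _ hm); have := weight_ge0 hz; lia.
rewrite subr0 mcoeffXM leading_mono_raise //.
have [mi0 | mi0] := posnP (m i).
  rewrite mulr0; case: eqP => [em|]; last by rewrite mulr0.
  by move: mi0; rewrite em mnmDE mnm1E eqxx.
have le_im : (U_(i) <= m)%MM by apply/mnm_lepP => j; rewrite mnm1E; case: eqP => [<-|].
have dm : mdeg m = (mdeg (m - U_(i))).+1 by rewrite -{1}(submK le_im) mdegD mdeg1 addn1.
rewrite /= hc1; last by move: hm; rewrite dm ltnS.
rewrite mulrA; congr (_ * (nat_of_bool _)%:R).
by apply/eqP/eqP => [<- | ->]; rewrite addmC ?submK ?addmK.
Qed.

Lemma big_uniq_sub {R : Type} {idx : R} {op : Monoid.com_law idx} {I : eqType}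
    {s1 s2 : seq I} (G : I -> R) : uniq s1 -> uniq s2 -> {subset s1 <= s2} ->
  \big[op/idx]_(i <- s1) G i = \big[op/idx]_(i <- s2 | i \in s1) G i.
Proof.
move=> u1 u2 sub; rewrite -[RHS]big_filter; apply: perm_big.
apply: uniq_perm => [||i]; rewrite ?filter_uniq // mem_filter.
by case: (boolP (i \in s1)) => // /sub ->.
Qed.

Section Basis.

Variable F : triple -> HH.
Hypothesis schurF : schur_pqr F.

Lemma leading_term_schur {x : triple} : nonneg x -> leading_term F x.
Proof.
case: schurF => F0 Fout Fsat.
move=> hx; have [n wx] : exists n : nat, weight x = n%:Z.
  by exists `|weight x|%N; have := weight_ge0 hx; lia.
elim/ltn_ind: n x hx wx => n IH x hx wx.
case px: (parent x) => [[i x0]|]; last first.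
  rewrite (parent0 hx px); exists 1 => [|m _]; first exact: oner_neq0.
  rewrite F0 mcoeff1 mul1r; congr ((nat_of_bool _)%:R); congr (_ == _).
  by apply/mnmP => k; rewrite mnm0E /leading_mono mnmE; case: (val k) => [|[|]].
have [et hx0] := parentP hx px.
have wx0 : weight x0 + 1 = n by rewrite -wx et weight_raise.
rewrite et.
have [c c0 ex] := rec_cons i hx0.
apply: (leading_term_raise Fout hx0 ex c0 (Fsat i x0 hx0)).
  by apply: (IH `|weight x0|%N) => //; have := weight_ge0 hx0; lia.
move=> [a z] zin /= hz; have := rec_weight_behead i x0 (a, z); rewrite ex /= => /(_ zin) wz.
by apply: (IH `|weight z|%N _ z hz); have := weight_ge0 hz; lia.
Qed.

(* Compare coefficients at the leading monomial of a term of maximal weight. *)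
Lemma schur_pqr_free (s : seq triple) (c : triple -> CC) :
  uniq s -> all nonneg s -> \sum_(x <- s) c x *: F x = 0 -> {in s, forall x, c x = 0}.
Proof.
move=> us hs hsum x0 x0s; apply/eqP/negPn/negP => cx0.
pose P n := has (fun x => (c x != 0) && (`|weight x| == n)%N) s.
have exP : exists n, P n.
  by exists `|weight x0|%N; apply/hasP; exists x0 => //; rewrite cx0 eqxx.
have ubP n : P n -> (n <= \max_(x <- s) `|weight x|)%N.
  by move=> /hasP [x xs /andP [_ /eqP <-]]; apply: leq_bigmax_seq.
case: (ex_maxnP exP ubP) => N /hasP [x xs /andP [cx /eqP wx]] maxN.
have hx := allP hs x xs; have [d d0 hd] := leading_term_schur hx.
have := congr1 (mcoeff (leading_mono x)) hsum.
rewrite mcoeff0 raddf_sum /= (bigD1_seq x) //= big_seq_cond big1 => [|y /andP [ys yx]].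
  rewrite addr0 mcoeffZ hd ?mdeg_leading_mono // eqxx mulr1 => /eqP.
  by rewrite mulf_eq0 (negbTE cx) (negbTE d0).
rewrite mcoeffZ; have [->|cy] := eqVneq (c y) 0; first by rewrite mul0r.
have hy := allP hs y ys; have [e _ he] := leading_term_schur hy.
rewrite he; last first.
  by rewrite mdeg_leading_mono // wx; apply: maxN; apply/hasP; exists y => //; rewrite cy eqxx.
case: eqP => [/(leading_mono_inj hx hy) exy | _]; last by rewrite !mulr0.
by move: yx; rewrite exy eqxx.
Qed.

Definition in_span (p : HH) : Prop := exists (s : seq triple) (c : triple -> CC),
  [/\ uniq s, all nonneg s & p = \sum_(x <- s) c x *: F x].

Lemma in_span0 : in_span 0.
Proof. by exists [::], (fun _ => 0); rewrite big_nil. Qed.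

Lemma in_spanF (x : triple) : in_span (F x).
Proof.
have [hx|hx] := boolP (nonneg x); last first.
  by case: schurF => _ Fout _; rewrite Fout //; exact: in_span0.
by exists [:: x], (fun _ => 1); rewrite big_seq1 scale1r /= hx.
Qed.

Lemma in_spanZ (a : CC) (p : HH) : in_span p -> in_span (a *: p).
Proof.
case=> s [c [us hs ->]]; exists s, (fun x => a * c x); split => //.
by rewrite scaler_sumr; apply: eq_bigr => x _; rewrite scalerA.
Qed.

Lemma in_spanD (p1 p2 : HH) : in_span p1 -> in_span p2 -> in_span (p1 + p2).
Proof.
case=> s1 [c1 [u1 hs1 ->]] [s2 [c2 [u2 hs2 ->]]].
set s := undup (s1 ++ s2); have us : uniq s by exact: undup_uniq.
exists s, (fun x => (if x \in s1 then c1 x else 0) + (if x \in s2 then c2 x else 0)).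
split => //; first by rewrite all_undup all_cat hs1.
rewrite (big_uniq_sub _ u1 us) => [|x xs]; last by rewrite mem_undup mem_cat xs.
rewrite (big_uniq_sub _ u2 us) => [|x xs]; last by rewrite mem_undup mem_cat xs orbT.
rewrite [X in X + _]big_mkcond [X in _ + X]big_mkcond -big_split; apply: eq_bigr => x _ /=.
by rewrite scalerDl; case: (x \in s1); case: (x \in s2); rewrite ?scale0r.
Qed.

Lemma in_span_sum (I : Type) (r : seq I) (f : I -> HH) :
  (forall i, in_span (f i)) -> in_span (\sum_(i <- r) f i).
Proof. by move=> hf; apply: big_ind => //; [exact: in_span0 | exact: in_spanD]. Qed.

Lemma in_spanXM (i : 'I_3) (p : HH) : in_span p -> in_span ('X_i * p).
Proof.
case: schurF => _ Fout Fsat [s [c [_ _ ->]]].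
rewrite mulr_sumr; apply: in_span_sum => x; rewrite -scalerAr; apply: in_spanZ.
have [hx|hx] := boolP (nonneg x); last by rewrite Fout // mulr0; exact: in_span0.
by rewrite Fsat //; apply: in_span_sum => y; apply: in_spanZ; exact: in_spanF.
Qed.

Lemma in_span_all (p : HH) : in_span p.
Proof.
rewrite (mpolyE p); apply: in_span_sum => m; apply: in_spanZ.
rewrite mpolyXE_id; apply: big_rec => [|i q _ hq].
  by case: schurF => F0 _ _; rewrite -F0; exact: in_spanF.
elim: (m i) => [|k IH]; first by rewrite expr0 mul1r.
by rewrite exprS -mulrA; exact: in_spanXM.
Qed.

End Basis.

Lemma genus2_schur_free (phi : triple -> HH) : genus2_schur phi ->
  forall (s : seq triple) (c : triple -> CC), uniq s -> all admissible s ->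
  \sum_(t <- s) c t *: phi t = 0 -> forall t, t \in s -> c t = 0.
Proof.
move=> /genus2_schur_pqr schurF s c us hs hsum t ts.
have pqr_ofK_in : {in s, cancel pqr_of spins} by move=> u /(allP hs) /pqr_ofK.
rewrite -(pqr_ofK_in t ts).
apply: (schur_pqr_free _ schurF (map pqr_of s) (c \o spins) _ _ _ _ (map_f _ ts)).
- by rewrite map_inj_in_uniq // => u v us' vs' /(congr1 spins); rewrite !pqr_ofK_in.
- by apply/allP => _ /mapP [u us' ->]; exact: nonneg_pqr_of (allP hs u us').
- rewrite big_map -[RHS]hsum big_seq [RHS]big_seq; apply: eq_bigr => u us' /=.
  by rewrite on_pqr_spins ?pqr_ofK_in // nonneg_pqr_of // (allP hs u us').
Qed.

Lemma genus2_schur_spanning (phi : triple -> HH) : genus2_schur phi ->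
  forall p : HH, exists (s : seq triple) (c : triple -> CC),
    all admissible s /\ p = \sum_(t <- s) c t *: phi t.
Proof.
move=> /genus2_schur_pqr schurF p.
have [s [c [_ hs ->]]] := in_span_all _ schurF p.
exists (map spins s), (c \o pqr_of); split.
  by apply/allP => _ /mapP [x xs ->]; rewrite admissible_spins (allP hs x xs).
rewrite big_map big_seq [RHS]big_seq; apply: eq_bigr => x xs /=.
by rewrite spinsK on_pqr_spins // (allP hs x xs).
Qed.

Theorem mainTheorem6 :
  (exists phi : triple -> HH, genus2_schur phi) /\
  (forall phi : triple -> HH, genus2_schur phi -> is_basis_on_J phi).
Proof.
split; first by exists (schur \o pqr_of); apply: schur_pqr_genus2; exact: schur_pqr_schur.
by move=> phi hphi; split; [exact: genus2_schur_free | exact: genus2_schur_spanning].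
Qed.
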